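(* Let $G$ be an infinite group and let $k$ be a field. Then for every integer $n\ge1$ the following are equivalent: (i) every stably injective $\tau\in\mathrm{LNUCA}_c(G,k^n)$ is surjective; (ii) the ring $\mathrm{LNUCA}_c(G,k^n)$ is directly finite; (iii) the ring $M_n(D^1(k[G]))$ is directly finite.
   Context: For $V=k^n$, $g\in G$, $x\in V^G$: $(gx)(h)=x(g^{-1}h)$. For finite $M\subset G$, $S=\mathcal{L}(V^M,V)$, $s\in S^G$: $\sigma_s(x)(g)=s(g)((g^{-1}x)\vert_M)$. $\mathrm{LNUCA}_c(G,V)$ is the set of $\sigma_s$ with $M$ finite and $s$ constant outside a finite subset of $G$; it is a ring with pointwise addition and composition. $\Sigma(s)$ is the closure of $\{gs:g\in G\}$ in $S^G$ (prodiscrete topology); $\sigma_s$ is stably injective if $\sigma_p$ is injective for all $p\in\Sigma(s)$. A ring is directly finite if $ab=1$ implies $ba=1$. $D^1(k[G])=k[G]\times(k[G])[G]$ ($(k[G])[G]$ = finitely supported maps $G\to k[G]$) with componentwise addition and multiplication $(\alpha_1,\beta_1)*(\alpha_2,\beta_2)=(\alpha_1\alpha_2,\alpha_1\beta_2+\beta_1\alpha_2+\beta_1\beta_2)$, where $\alpha_1\alpha_2$ is the group ring product and $(\alpha\beta)(g)(h)=\sum_t\alpha(t)\beta(gt)(t^{-1}h)$, $(\beta\alpha)(g)(h)=\sum_t\beta(g)(t)\alpha(t^{-1}h)$, $(\beta\gamma)(g)(h)=\sum_t\beta(g)(t)\gamma(gt)(t^{-1}h)$. *)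

From HB Require Import structures.
From mathcomp Require Import all_boot all_order all_algebra.
From mathcomp Require Import monoid.
From mathcomp Require Import finmap.
From mathcomp Require Import boolp classical_sets cardinality fsbigop.

Set Implicit Arguments.
Unset Strict Implicit.
Unset Printing Implicit Defensive.

Import GRing.Theory.
Local Open Scope fset_scope.
Local Open Scope classical_set_scope.
Local Open Scope ring_scope.

Section LNUCA.
Variables (G : groupType) (k : fieldType) (n : nat).

Definition V := 'rV[k]_n.
Definition config := G -> V.

Definition shift (g : G) (x : config) : config :=
  fun h => x ((g^-1)%g * h)%g.

Definition Srule (M : {fset G}) := {linear {ffun M -> V} -> V}.

Definition restr (M : {fset G}) (x : config) : {ffun M -> V} :=
  [ffun m : M => x (val m)].

Definition sigma (M : {fset G}) (s : G -> Srule M) (x : config) : config :=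
  fun g => s g (restr M (shift (g^-1)%g x)).

Definition const_off_finite (M : {fset G}) (s : G -> Srule M) : Prop :=
  exists (E : {fset G}) (c : Srule M), forall g, g \notin E -> s g = c.

Definition LNUCA_c (tau : config -> config) : Prop :=
  exists (M : {fset G}) (s : G -> Srule M),
    const_off_finite s /\ forall x, tau x = sigma s x.

Definition shift_rule (M : {fset G}) (g : G) (s : G -> Srule M) : G -> Srule M :=
  fun h => s ((g^-1)%g * h)%g.

(* Sigma(s): the closure of the orbit {g s} in S^G for the prodiscrete
   topology; the basic open neighbourhoods of p are the cylinders
   {q | q = p on F}, F a finite subset of G. *)
Definition Sigma (M : {fset G}) (s : G -> Srule M) (p : G -> Srule M) : Prop :=
  forall F : {fset G}, exists g : G, forall h, h \in F -> p h = shift_rule g s h.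

Definition stably_injective (M : {fset G}) (s : G -> Srule M) : Prop :=
  forall p, Sigma s p -> injective (sigma p).

Definition LNUCA_c_directly_finite : Prop :=
  forall a b : config -> config, LNUCA_c a -> LNUCA_c b ->
    (forall x, a (b x) = x) -> (forall x, b (a x) = x).

End LNUCA.

Section D1.
Variables (G : groupType) (k : fieldType).

Definition kG := G -> k.
Definition fin_supp (a : kG) : Prop := finite_set [set g | a g != 0].

Definition kGG := G -> kG.
Definition fin_supp2 (b : kGG) : Prop :=
  finite_set [set g | b g <> (fun _ => 0)] /\ forall g, fin_supp (b g).

Definition kG_add (a1 a2 : kG) : kG := fun h => a1 h + a2 h.
Definition kGG_add (b1 b2 : kGG) : kGG := fun g => kG_add (b1 g) (b2 g).

Definition kG_mul (a1 a2 : kG) : kG :=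
  fun h => \sum_(t \in [set: G]) a1 t * a2 ((t^-1)%g * h)%g.
Definition mul_ab (a : kG) (b : kGG) : kGG :=
  fun g h => \sum_(t \in [set: G]) a t * b (g * t)%g ((t^-1)%g * h)%g.
Definition mul_ba (b : kGG) (a : kG) : kGG :=
  fun g h => \sum_(t \in [set: G]) b g t * a ((t^-1)%g * h)%g.
Definition mul_bb (b c : kGG) : kGG :=
  fun g h => \sum_(t \in [set: G]) b g t * c (g * t)%g ((t^-1)%g * h)%g.

Definition D1 := (kG * kGG)%type.
Definition inD1 (x : D1) : Prop := fin_supp x.1 /\ fin_supp2 x.2.

Definition D1_zero : D1 := (fun _ => 0, fun _ _ => 0).
Definition D1_one : D1 := (fun h => if h == 1%g then 1 else 0, fun _ _ => 0).
Definition D1_add (x y : D1) : D1 := (kG_add x.1 y.1, kGG_add x.2 y.2).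
Definition D1_mul (x y : D1) : D1 :=
  (kG_mul x.1 y.1,
   kGG_add (kGG_add (mul_ab x.1 y.2) (mul_ba x.2 y.1)) (mul_bb x.2 y.2)).

Definition mxD1 (n : nat) := 'I_n -> 'I_n -> D1.
Definition in_mxD1 (n : nat) (A : mxD1 n) : Prop := forall i j, inD1 (A i j).
Definition mxD1_one (n : nat) : mxD1 n :=
  fun i j => if i == j then D1_one else D1_zero.
Definition mxD1_mul (n : nat) (A B : mxD1 n) : mxD1 n :=
  fun i j => \big[D1_add/D1_zero]_(l < n) D1_mul (A i l) (B l j).

Definition mxD1_directly_finite (n : nat) : Prop :=
  forall A B : mxD1 n, in_mxD1 A -> in_mxD1 B ->
    mxD1_mul A B = @mxD1_one n -> mxD1_mul B A = @mxD1_one n.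

End D1.

From HB Require Import structures.
From mathcomp Require Import all_boot all_order all_algebra.
From mathcomp Require Import monoid.
From mathcomp Require Import finmap.
From mathcomp Require Import boolp classical_sets cardinality fsbigop functions.

(* The orbit closure of a rule [s] that is constant, equal to [c], off a finite
   set consists of the translates of [s] and of the constant rule [c].
   (i) => (ii): if [sigma_a sigma_b = 1], comparing the two sides far from the
   exceptional sets gives [sigma_ca sigma_cb = 1], so every rule in the orbit
   closure of [b] is injective; by (i) [sigma_b] is onto, hence [sigma_b sigma_a = 1].
   (ii) => (i): [sigma_c] is injective.  The patterns on a ball that extend to
   configurations killed by [sigma_c] on a larger ball form decreasing
   finite-dimensional spaces; they stabilize (Mittag-Leffler), so [x 1] is a linear
   function of [sigma_c x] on a finite window and [sigma_c] has a left inverse in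
   [LNUCA_c], two-sided by (ii).  Then [sigma_s = sigma_c (1 + P)] with [P] of finite
   support, and an injective [1 + P] is onto by finite dimensionality.
   (ii) <=> (iii): [M_n(D^1(k[G]))] acts on [(k^n)^G], faithfully because [G] is
   infinite, and this action is a ring isomorphism onto [LNUCA_c(G, k^n)]. *)

Set Implicit Arguments.
Unset Strict Implicit.
Unset Printing Implicit Defensive.
Import GRing.Theory.
Local Open Scope ring_scope.

Lemma exists_notin_fset (T : choiceType) :
  infinite_set [set: T] -> forall F : {fset T}, exists x, x \notin F.
Proof.
move=> inf F; have [x [_ xF]] := infinite_setN0 (infinite_setD inf (finite_fset F)).
by exists x; apply/negP.
Qed.

Section Configurations.
Variables (G : groupType) (k : fieldType) (n : nat).
Local Notation cfg := (config G k n).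

Lemma shiftM (a b : G) (x : cfg) : shift a (shift b x) = shift (a * b)%g x.
Proof. by apply/funext => h; rewrite /shift invgM mulgA. Qed.

Lemma shift1 (x : cfg) : shift 1%g x = x.
Proof. by apply/funext => h; rewrite /shift invg1 mul1g. Qed.

Lemma shiftK (g : G) : cancel (@shift G k n g) (shift g^-1%g).
Proof. by move=> x; rewrite shiftM mulVg shift1. Qed.

Lemma shiftVK (g : G) : cancel (@shift G k n g^-1%g) (shift g).
Proof. by move=> x; rewrite shiftM mulgV shift1. Qed.

Lemma restr_shiftV (M : {fset G}) (g : G) (x : cfg) (m : M) :
  restr M (shift g^-1%g x) m = x (g * val m)%g.
Proof. by rewrite ffunE /shift invgK. Qed.

Lemma restr_is_linear (M : {fset G}) : linear (@restr G k n M).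
Proof. by move=> a x y; apply/ffunP => m; rewrite !ffunE. Qed.
HB.instance Definition _ (M : {fset G}) :=
  GRing.isLinear.Build k cfg {ffun M -> V k n} *:%R (restr M) (@restr_is_linear M).

Lemma shift_is_linear (g : G) : linear (@shift G k n g).
Proof. by []. Qed.
HB.instance Definition _ (g : G) :=
  GRing.isLinear.Build k cfg cfg *:%R (shift g) (@shift_is_linear g).

Definition cfg_eval (g : G) (x : cfg) : V k n := x g.

Lemma cfg_eval_is_linear (g : G) : linear (cfg_eval g).
Proof. by []. Qed.
HB.instance Definition _ (g : G) :=
  GRing.isLinear.Build k cfg (V k n) *:%R (cfg_eval g) (@cfg_eval_is_linear g).

Section Rules.
Variables (M : {fset G}) (s : G -> Srule k n M).

Lemma sigma_is_linear : linear (sigma s).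
Proof. by move=> a x y; apply/funext => g; rewrite /sigma !linearP. Qed.
HB.instance Definition _ :=
  GRing.isLinear.Build k cfg cfg *:%R (sigma s) sigma_is_linear.

Lemma sigma_local (x y : cfg) g :
  (forall m, m \in M -> x (g * m)%g = y (g * m)%g) -> sigma s x g = sigma s y g.
Proof.
move=> xy; rewrite /sigma; congr (s g _); apply/ffunP => m.
by rewrite !restr_shiftV xy ?fsvalP.
Qed.

Lemma sigma_shift_rule g (x : cfg) :
  sigma (shift_rule g s) x = shift g (sigma s (shift g^-1%g x)).
Proof.
apply/funext => h; rewrite /sigma /shift_rule {2}/shift; congr (s _ _).
by rewrite shiftM invgM invgK mulgK.
Qed.

Lemma sigma_supp (E : {fset G}) (x : cfg) g :
  (forall h, h \notin E -> x h = 0) ->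
  g \notin [fset (e * m^-1)%g | e in E, m in M]%fset -> sigma s x g = 0.
Proof.
move=> xE gEM; rewrite -[RHS]/((0 : cfg) g) -(linear0 (sigma s)).
apply: sigma_local => m mM.
rewrite xE //; apply: contra gEM => gmE; apply/imfset2P.
by exists (g * m)%g => //; exists m; rewrite ?mulgK.
Qed.

End Rules.

Lemma sigma_cst_shift (M : {fset G}) (c : Srule k n M) g (x : cfg) :
  sigma (cst c) (shift g x) = shift g (sigma (cst c) x).
Proof. by have := sigma_shift_rule (cst c) g (shift g x); rewrite shiftK. Qed.

Lemma eq_sigma (M : {fset G}) (p q : G -> Srule k n M) : p =1 q -> sigma p = sigma q.
Proof. by move=> /funext ->. Qed.

Definition ext (D : {fset G}) (u : {ffun D -> V k n}) : cfg :=
  fun g => if insub g is Some h then u h else 0.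

Lemma ext_is_linear (D : {fset G}) : linear (@ext D).
Proof.
move=> a u v; apply/funext => g.
suff: ext (a *: u + v) g = a *: ext u g + ext v g by [].
by rewrite /ext; case: insubP => [h _ _|_]; rewrite ?ffunE ?scaler0 ?addr0.
Qed.
HB.instance Definition _ (D : {fset G}) :=
  GRing.isLinear.Build k {ffun D -> V k n} cfg *:%R (@ext D) (@ext_is_linear D).

Lemma ext_val (D : {fset G}) (u : {ffun D -> V k n}) (h : D) : ext u (val h) = u h.
Proof. by rewrite /ext valK. Qed.

Lemma ext_out (D : {fset G}) (u : {ffun D -> V k n}) g : g \notin D -> ext u g = 0.
Proof. by move=> gD; rewrite /ext insubN. Qed.

Lemma ext_restr (D : {fset G}) (x : cfg) g : g \in D -> ext (restr D x) g = x g.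
Proof. by move=> gD; rewrite -[g]/(val [` gD]%fset) ext_val ffunE. Qed.

Lemma restr_ext (D : {fset G}) : cancel (@ext D) (restr D).
Proof. by move=> u; apply/ffunP => h; rewrite ffunE ext_val. Qed.

End Configurations.

Definition stably_surjunctive (G : groupType) (k : fieldType) (n : nat) : Prop :=
  forall (M : {fset G}) (s : G -> Srule k n M),
    const_off_finite s -> stably_injective s -> forall y, exists x, sigma s x = y.

Section OrbitClosure.
Variables (G : groupType) (k : fieldType) (n : nat).
Hypothesis infG : infinite_set [set: G].
Local Notation cfg := (config G k n).

Lemma Sigma_shift_or_cst (M E : {fset G}) (s : G -> Srule k n M) c p :
  (forall g, g \notin E -> s g = c) -> Sigma s p ->
  (exists g, p =1 shift_rule g s) \/ p =1 cst c.
Proof.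
move=> sE Sp; have [|/existsNP [h0 ph0]] := pselect (p =1 cst c); first by right.
left; apply: contrapT => /forallNP no_shift.
have [f pf] := boolp.choice (fun g => (existsNP _).2 (no_shift g)).
(* only the finitely many [g] with [g^-1 h0 \in E] can match [p] at [h0] *)
pose Gam := [fset (h0 * e^-1)%g | e in E]%fset.
have [g pg] := Sp (h0 |` [fset f g | g in Gam])%fset.
have Gg : g \in Gam.
  have := pg h0; rewrite !inE eqxx => /(_ isT) ph.
  apply/imfsetP; exists (g^-1 * h0)%g; last by rewrite invgM invgK mulVKg.
  by apply: contraT => /sE e; case: ph0; rewrite ph /shift_rule e.
by apply: (pf g); apply: pg; rewrite !inE; apply/orP; right; apply/imfsetP; exists g.
Qed.

Lemma Sigma_cst (M E : {fset G}) (s : G -> Srule k n M) c :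
  (forall g, g \notin E -> s g = c) -> Sigma s (cst c).
Proof.
move=> sE F; have [g gFE] := exists_notin_fset infG [fset (h * e^-1)%g | h in F, e in E]%fset.
exists g => h hF; rewrite /shift_rule sE //; apply: contra gFE => gE.
by apply/imfset2P; exists h => //; exists (g^-1 * h)%g; rewrite ?invgM ?invgK ?mulVKg.
Qed.

Variables (Ma Mb Ea Eb : {fset G}) (sa : G -> Srule k n Ma) (sb : G -> Srule k n Mb).
Variables (ca : Srule k n Ma) (cb : Srule k n Mb).
Hypotheses (saE : forall g, g \notin Ea -> sa g = ca) (sbE : forall g, g \notin Eb -> sb g = cb).

Lemma cancel_sigma_cst :
  cancel (sigma sb) (sigma sa) -> cancel (sigma (cst cb)) (sigma (cst ca)).
Proof.
move=> sab.
(* far from [Ea] and [Eb Ma^-1] both rules are constant, and the identity at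
   one such [g] transports to every point by equivariance *)
have [g gN] := exists_notin_fset infG (Ea `|` [fset (e * m^-1)%g | e in Eb, m in Ma])%fset.
have at_g (y : cfg) : sigma (cst ca) (sigma (cst cb) y) g = y g.
  rewrite -{2}(sab y) [in RHS]/sigma saE; last by apply: contra gN; rewrite inE => ->.
  rewrite /sigma; congr (ca _); apply/ffunP => m; rewrite !restr_shiftV /= sbE //.
  apply: contra gN => gmE; rewrite inE; apply/orP; right; apply/imfset2P.
  by exists (g * val m)%g => //; exists (val m); rewrite ?mulgK ?fsvalP.
move=> y; apply/funext => h.
have := at_g (shift (g * h^-1)%g y); rewrite !sigma_cst_shift /shift.
by rewrite invgM invgK mulgVK.
Qed.

Lemma cancel_stably_injective : cancel (sigma sb) (sigma sa) -> stably_injective sb.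
Proof.
move=> sab p /(Sigma_shift_or_cst sbE) [[g /eq_sigma ->]|/eq_sigma ->].
  move=> x1 x2; rewrite !sigma_shift_rule => /(can_inj (@shiftK G k n g)).
  by move=> /(can_inj sab) /(can_inj (@shiftVK G k n g)).
exact: can_inj (cancel_sigma_cst sab).
Qed.

End OrbitClosure.

Lemma stably_surjunctive_directly_finite (G : groupType) (k : fieldType) (n : nat) :
  infinite_set [set: G] -> stably_surjunctive G k n -> LNUCA_c_directly_finite G k n.
Proof.
move=> infG surj a b [Ma [sa [[Ea [ca saE]] /funext->]]] [Mb [sb [[Eb [cb sbE]] /funext->]]] ab x.
have SI := cancel_stably_injective infG saE sbE ab.
have [z <-] := surj Mb sb (ex_intro _ Eb (ex_intro _ cb sbE)) SI x.
by rewrite ab.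
Qed.

Lemma nonincreasing_nat_stationary (f : nat -> nat) i :
  (forall j j', (i <= j <= j')%N -> (f j' <= f j)%N) ->
  exists2 J, (i <= J)%N & forall j, (J <= j)%N -> f j = f J.
Proof.
move: {2}(f i) (erefl (f i)) => d; elim/ltn_ind: d i => d IH i fid mono.
have [stat|/existsNP [j /not_implyP [ij fj]]] := pselect (forall j, (i <= j)%N -> f j = f i).
  by exists i.
have fjd : (f j < d)%N.
  by rewrite -fid ltn_neqAle mono ?ij ?andbT ?leqnn //; apply/eqP.
have monoj a b : (j <= a <= b)%N -> (f b <= f a)%N.
  by case/andP => ja ab; apply: mono; rewrite (leq_trans ij ja).
by have [J jJ fJ] := IH _ fjd j erefl monoj; exists J => //; apply: leq_trans jJ.
Qed.

Section MittagLeffler.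
Variables (G : groupType) (k : fieldType) (n : nat).
Variables (M : {fset G}) (c : Srule k n M).
Local Notation cfg := (config G k n).
Local Notation sc := (sigma (cst c) : cfg -> cfg).

Definition ball_gen : {fset G} := (M `|` [fset m^-1 | m in M] `|` [fset 1])%fset%g.

Fixpoint ball (i : nat) : {fset G} :=
  if i is i'.+1 then [fset (a * b)%g | a in ball i', b in ball_gen]%fset else [fset 1%g]%fset.

Lemma ball_mul i g b : g \in ball i -> b \in ball_gen -> (g * b)%g \in ball i.+1.
Proof. by move=> gi bB; apply/imfset2P; exists g => //; exists b. Qed.

Lemma ball_mono i j : (i <= j)%N -> {subset ball i <= ball j}.
Proof.
move=> /subnK <-; elim: (j - i)%N => [|d IH] g // /IH gd.
by rewrite addSn -[g]mulg1 ball_mul // !inE eqxx !orbT.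
Qed.

Lemma ball1 i : 1%g \in ball i.
Proof. by apply: (ball_mono (leq0n i)); rewrite inE. Qed.

Lemma ball_mulM i g m : g \in ball i -> m \in M -> (g * m)%g \in ball i.+1.
Proof. by move=> gi mM; rewrite ball_mul // !inE mM. Qed.

Lemma ball_divM i g m : (g * m)%g \in ball i -> m \in M -> g \in ball i.+1.
Proof.
move=> gmi mM; rewrite -(mulgK m g) ball_mul // !inE; apply/orP; left.
by apply/orP; right; apply/imfsetP; exists m.
Qed.

Lemma sigma_cst_ball j (x y : cfg) h :
  h \in ball j -> {in ball j.+1, x =1 y} -> sc x h = sc y h.
Proof. by move=> hj xy; apply: sigma_local => m mM; apply/xy/ball_mulM. Qed.

Definition null_on j (x : cfg) := {in ball j, forall h, sc x h = 0}.

Definition liftable i j (y : cfg) := exists2 x, null_on j x & {in ball i.+1, x =1 y}.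

Lemma null_on_mono j j' x : (j <= j')%N -> null_on j' x -> null_on j x.
Proof. by move=> jj' x0 h /(ball_mono jj'); apply: x0. Qed.

Lemma liftable_mono i j j' y : (j <= j')%N -> liftable i j' y -> liftable i j y.
Proof. by move=> jj' [x /(null_on_mono jj') x0 xy]; exists x. Qed.

Section Stationarity.
Variable i : nat.

Definition liftable_space j : {vspace {ffun ball i.+1 -> V k n}} :=
  (linfun (restr (ball i.+1) \o @ext G k n (ball j.+1)) @:
     lker (linfun (restr (ball j) \o sc \o @ext G k n (ball j.+1))))%VS.

Lemma liftableP j y :
  (i <= j)%N -> liftable i j y <-> restr (ball i.+1) y \in liftable_space j.
Proof.
move=> ij; split.
  move=> [x x0 xy]; apply/memv_imgP; exists (restr (ball j.+1) x).
    rewrite memv_ker lfunE; apply/eqP/ffunP => h; rewrite !ffunE /= -[RHS](x0 _ (fsvalP h)).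
    by apply: sigma_cst_ball (fsvalP h) _ => g gj; rewrite ext_restr.
  rewrite lfunE; apply/ffunP => h; have hi := fsvalP h.
  have hj : val h \in ball j.+1 by apply: ball_mono hi; rewrite ltnS.
  by rewrite !ffunE /= ext_restr // xy.
move=> /memv_imgP [u]; rewrite memv_ker lfunE /= => /eqP/ffunP u0.
rewrite lfunE /= => /ffunP uy; exists (ext u).
  by move=> h hj; have := u0 [` hj]%fset; rewrite !ffunE.
by move=> h hi; have := uy [` hi]%fset; rewrite !ffunE.
Qed.

Lemma liftable_space_decr j j' :
  (i <= j <= j')%N -> (liftable_space j' <= liftable_space j)%VS.
Proof.
case/andP => ij jj'; apply/subvP => w; rewrite -[w](restr_ext) => w_j'.
by apply/liftableP/(liftable_mono jj')/liftableP => //; apply: leq_trans jj'.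
Qed.

Lemma liftable_stationary :
  exists2 J, (i <= J)%N & forall j y, (J <= j)%N -> liftable i J y -> liftable i j y.
Proof.
have [J iJ dimJ] := nonincreasing_nat_stationary
  (fun j j' ijj' => dimvS (liftable_space_decr ijj')).
exists J => // j y Jj; have ij := leq_trans iJ Jj.
have eqJ : liftable_space j = liftable_space J.
  by apply/eqP; rewrite eqEdim liftable_space_decr ?iJ ?dimJ //=.
by move=> /liftableP; rewrite -eqJ => /(_ iJ) /liftableP; apply.
Qed.

End Stationarity.

Definition always_liftable i (y : cfg) := forall j, liftable i j y.

Lemma null_on_always_liftable i J x :
  (forall j y, (J <= j)%N -> liftable i J y -> liftable i j y) ->
  null_on J x -> always_liftable i x.
Proof.
move=> statJ x0 j; have xJ : liftable i J x by exists x.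
by case: (leqP J j) => [/statJ|/ltnW /liftable_mono]; apply.
Qed.

Lemma always_liftable_succ i y : always_liftable i y ->
  exists2 y', always_liftable i.+1 y' & {in ball i.+1, y' =1 y}.
Proof.
move=> yi; have [J _ statJ] := liftable_stationary i.+1.
have [x x0 xy] := yi J; exists x => //; exact: null_on_always_liftable statJ x0.
Qed.

Lemma always_liftable_thread x0 : always_liftable 0 x0 ->
  exists ys : nat -> cfg, [/\ ys 0%N = x0, forall i, always_liftable i (ys i)
                            & forall i, {in ball i.+1, ys i.+1 =1 ys i}].
Proof.
move=> x0l.
have step (p : nat * cfg) : exists y', always_liftable p.1 p.2 ->
    always_liftable p.1.+1 y' /\ {in ball p.1.+1, y' =1 p.2}.
  have [/always_liftable_succ [y' y'l y'y]|nl] := pselect (always_liftable p.1 p.2).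
    by exists y'.
  by exists p.2 => /nl.
have [next nextP] := boolp.choice step.
pose fix ys i : cfg := if i is i'.+1 then next (i', ys i') else x0.
have ysl i : always_liftable i (ys i).
  by elim: i => [|i /(nextP (i, _)) []].
by exists ys; split => // i; have [] := nextP (i, ys i) (ysl i).
Qed.

Lemma always_liftable_limit (ys : nat -> cfg) :
  (forall i, always_liftable i (ys i)) -> (forall i, {in ball i.+1, ys i.+1 =1 ys i}) ->
  exists2 z, sc z = 0 & z 1%g = ys 0%N 1%g.
Proof.
move=> ysl ys_coh.
have ys_cohD i d : {in ball i.+1, ys (i + d)%N =1 ys i}.
  move=> h hi; elim: d => [|d IH]; first by rewrite addn0.
  by rewrite addnS ys_coh ?(ball_mono _ hi) // ltnS leq_addr.
pose z : cfg := fun h =>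
  if pselect (exists i, h \in ball i) is left hb then ys (ex_minn hb) h else 0.
have zE i : {in ball i.+1, z =1 ys i}.
  move=> h hi; rewrite /z; case: pselect => [hb|[]]; last by exists i.+1.
  case: ex_minnP => i0 hi0 min0; case: (leqP i0 i) => [i0i|ii0].
    by rewrite -(subnKC i0i) ys_cohD // (ball_mono _ hi0).
  have -> : i0 = i.+1 by apply/eqP; rewrite eqn_leq ii0 min0.
  exact: ys_coh.
exists z; last exact: zE 0%N 1%g (ball1 1).
apply/funext => g; rewrite -[RHS]/(0 : V k n).
have [[i gi]|nob] := pselect (exists i, g \in ball i).
  rewrite (sigma_cst_ball gi (zE i)); have [x x0 xy] := ysl i i.
  by rewrite -(x0 g gi); apply: sigma_cst_ball gi _ => h /xy.
(* outside every ball, [g M] is outside every ball too, where [z] vanishes *)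
rewrite -[RHS]/((0 : cfg) g) -(linear0 sc); apply: sigma_local => m mM.
rewrite /z; case: pselect => // -[i gmi].
by case: nob; exists i.+1; apply: ball_divM gmi mM.
Qed.

Lemma injective_sigma_cst_window :
  injective sc -> exists J, forall x, null_on J x -> x 1%g = 0.
Proof.
move=> sc_inj; apply: contrapT => /forallNP noJ.
have [J0 _ statJ0] := liftable_stationary 0.
have /existsNP [x0 /not_implyP [x0J0 x01]] := noJ J0.
have [ys [ys0 ysl ys_coh]] := always_liftable_thread (null_on_always_liftable statJ0 x0J0).
have [z sz0 z1] := always_liftable_limit ysl ys_coh.
have z0 : z = 0 by apply: sc_inj; rewrite sz0 linear0.
by apply: x01; rewrite -ys0 -z1 z0.
Qed.

Lemma sigma_cst_left_inverse :
  injective sc -> exists (N : {fset G}) (psi : Srule k n N), cancel sc (sigma (cst psi)).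
Proof.
move=> /injective_sigma_cst_window [J window].
pose N := ball J; pose NM := [fset (a * b)%g | a in N, b in M]%fset.
pose Th := linfun (restr N \o sc \o @ext G k n NM).
pose psi := (linfun (cfg_eval 1 \o @ext G k n NM) \o Th^-1)%VF.
exists N, psi.
(* [restr N (sc x)] determines [x 1] by the choice of [J], and [Th^-1] recovers
   some [v] with the same image, hence with [ext v 1 = x 1] *)
have psiE (x : cfg) : psi (restr N (sc x)) = x 1%g.
  have sc_loc : restr N (sc x) = Th (restr NM x).
    rewrite lfunE; apply/ffunP => h; rewrite !ffunE /=; apply: sigma_local => m mM.
    by rewrite ext_restr //; apply/imfset2P; exists (val h); [exact: fsvalP|exists m].
  have /limg_lfunVK : restr N (sc x) \in limg Th by rewrite sc_loc memv_img ?memvf.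
  rewrite comp_lfunE !lfunE /=; set v := (Th^-1)%VF _ => Thv.
  apply/eqP; rewrite eq_sym -subr_eq0; apply/eqP.
  rewrite -[LHS]/(cfg_eval 1 (x - ext v)); apply: window => h hN.
  move/ffunP: Thv => /(_ [` hN]%fset); rewrite !ffunE /= => scv.
  by rewrite linearB -[LHS]/(sc x h - sc (ext v) h) scv subrr.
move=> x; apply/funext => g.
rewrite -[LHS]/(psi (restr N (shift g^-1%g (sc x)))) -sigma_cst_shift psiE.
by rewrite /shift invgK mulg1.
Qed.

End MittagLeffler.

Section FiniteRankPerturbation.
Variables (G : groupType) (k : fieldType) (n : nat).
Local Notation cfg := (config G k n).

(* [idfun \+ P] preserves the finite-dimensional space of configurations
   supported on [Q], where injectivity gives surjectivity *)
Lemma injective_id_plus_fin_surjective (P : {linear cfg -> cfg}) (Q : {fset G}) :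
  (forall x g, g \notin Q -> P x g = 0) -> injective (idfun \+ P) ->
  forall y, exists x, (idfun \+ P) x = y.
Proof.
move=> PQ inj y; pose T := linfun (restr Q \o (idfun \+ P) \o @ext G k n Q).
have TQ (u : {ffun Q -> V k n}) g : g \notin Q -> (idfun \+ P) (ext u) g = 0.
  by move=> gQ; rewrite -[LHS]/(ext u g + P (ext u) g) ext_out // add0r PQ.
have Tinj : lker T == 0%VS.
  apply/lker0P => u1 u2; rewrite !lfunE /= => /ffunP Tu.
  apply: (can_inj (@restr_ext G k n Q)); apply: inj; apply/funext => g.
  have [gQ|gQ] := boolP (g \in Q); last by rewrite !TQ.
  by have := Tu [` gQ]%fset; rewrite !ffunE.
pose y_out : cfg := fun g => if g \in Q then 0 else y g.
pose r := y - (idfun \+ P) y_out.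
exists (y_out + ext ((T^-1)%VF (restr Q r))); rewrite linearD /=.
have /ffunP Tu := lker0_lfunVK Tinj (restr Q r); rewrite lfunE /= in Tu.
apply/funext => g; rewrite -[LHS]/((idfun \+ P) y_out g + (idfun \+ P) (ext _) g).
have [gQ|gQ] := boolP (g \in Q).
  by have := Tu [` gQ]%fset; rewrite !ffunE /= => ->; rewrite addrC subrK.
rewrite TQ // addr0 -[LHS]/(y_out g + P y_out g) PQ // addr0.
by rewrite /y_out (negbTE gQ).
Qed.

End FiniteRankPerturbation.

Lemma LNUCA_c_sigma_cst (G : groupType) (k : fieldType) (n : nat)
    (M : {fset G}) (c : Srule k n M) :
  LNUCA_c (sigma (cst c) : config G k n -> config G k n).
Proof. by exists M, (cst c); split => //; exists fset0, c. Qed.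

Lemma directly_finite_stably_surjunctive (G : groupType) (k : fieldType) (n : nat) :
  infinite_set [set: G] -> LNUCA_c_directly_finite G k n -> stably_surjunctive G k n.
Proof.
move=> infG DF M s [E [c sE]] SI y.
have ss_inj : injective (sigma s).
  by apply: SI => F; exists 1%g => h _; rewrite /shift_rule invg1 mul1g.
have [N [psi sc_can]] := sigma_cst_left_inverse (SI _ (Sigma_cst infG sE)).
have psi_can : cancel (sigma (cst psi)) (sigma (cst c)).
  exact: DF (LNUCA_c_sigma_cst psi) (LNUCA_c_sigma_cst c) sc_can.
pose P := sigma (cst psi) \o (sigma s \- sigma (cst c)).
have ssE x : sigma s x = sigma (cst c) ((idfun \+ P) x).
  by rewrite linearD /= psi_can addrC subrK.
have PQ x g : g \notin [fset (e * m^-1)%g | e in E, m in N]%fset -> P x g = 0.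
  apply: sigma_supp => h hE.
  by rewrite -[LHS]/(sigma s x h - sigma (cst c) x h) {1}/sigma sE ?subrr.
have [|x xy] := injective_id_plus_fin_surjective PQ _ (sigma (cst psi) y).
  by move=> x1 x2 /(congr1 (sigma (cst c))); rewrite -!ssE => /ss_inj.
by exists x; rewrite ssE xy psi_can.
Qed.

Section MatrixAction.
Variables (G : groupType) (k : fieldType) (n : nat).
Local Notation cfg := (config G k n).
Local Notation D1 := (D1 G k).
Local Notation mx := (mxD1 G k n).

(* [(alpha, beta)] acts by [x |-> (g |-> sum_t (alpha t + beta g t) x (g t))]:
   [alpha] is the uniform part of a cellular automaton and [beta g] its correction at [g] *)
Definition D1_kernel (a : D1) (g t : G) : k := a.1 t + a.2 g t.

Definition mxD1_act (A : mx) (x : cfg) : cfg := fun g =>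
  \row_(i < n) \sum_(j < n) \sum_(t \in [set: G]) D1_kernel (A i j) g t * x (g * t)%g 0 j.

Lemma D1_fin_supp (a : D1) : inD1 a ->
  exists S E : {fset G}, (forall g t, t \notin S -> a.1 t = 0 /\ a.2 g t = 0) /\
                        (forall g, g \notin E -> forall t, a.2 g t = 0).
Proof.
move=> [fin1 [fin2 fin3]]; pose E := fset_set [set g | a.2 g <> (fun _ => 0)].
have a2E g : g \notin E -> forall t, a.2 g t = 0.
  rewrite in_fset_set // notin_setE /= => nz t.
  by apply: contrapT => a2t; apply: nz => a2g; apply: a2t; rewrite a2g.
exists (fset_set [set t | a.1 t != 0] `|` \bigcup_(g <- E) fset_set [set t | a.2 g t != 0])%fset.
exists E; split => // g t; rewrite inE negb_or => /andP [tS1 tS2]; split.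
  by apply/eqP; apply: contraNT tS1 => a1t; rewrite in_fset_set //; exact: (mem_set a1t).
have [gE|/a2E //] := boolP (g \in E); apply/eqP; apply: contraNT tS2 => a2t.
apply/bigfcupP; exists g; rewrite ?gE // in_fset_set; [exact: mem_set a2t|exact: fin3].
Qed.

Lemma mxD1_fin_supp (A : mx) : in_mxD1 A ->
  exists S E : {fset G},
    (forall i j g t, t \notin S -> (A i j).1 t = 0 /\ (A i j).2 g t = 0) /\
    (forall i j g, g \notin E -> forall t, (A i j).2 g t = 0).
Proof.
move=> inA; have [S SP] := boolp.choice (fun p : 'I_n * 'I_n => D1_fin_supp (inA p.1 p.2)).
have [E SEP] := boolp.choice SP.
exists (\bigcup_(p <- enum {: 'I_n * 'I_n}) S p)%fset.
exists (\bigcup_(p <- enum {: 'I_n * 'I_n}) E p)%fset; split.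
  move=> i j g t tS; apply: (SEP (i, j)).1; apply: contra tS => tSij.
  by apply/bigfcupP; exists (i, j); rewrite ?mem_enum.
move=> i j g gE; apply: (SEP (i, j)).2; apply: contra gE => gEij.
by apply/bigfcupP; exists (i, j); rewrite ?mem_enum.
Qed.

Lemma D1_kernel_sum (F : 'I_n -> D1) g t :
  D1_kernel (\big[@D1_add G k/@D1_zero G k]_(l < n) F l) g t =
  \sum_(l < n) D1_kernel (F l) g t.
Proof.
elim/big_rec2: _ => [|l d s _ <-]; first by rewrite /D1_kernel /= addr0.
by rewrite /D1_kernel /D1_add /kGG_add /kG_add /= addrACA.
Qed.

Lemma D1_sum_snd (F : 'I_n -> D1) g t :
  (\big[@D1_add G k/@D1_zero G k]_(l < n) F l).2 g t = \sum_(l < n) (F l).2 g t.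
Proof. by elim/big_rec2: _ => [|l d s _ <-]. Qed.

(* the four terms of [D1_mul] are exactly the expansion of
   [(a.1 + a.2 g) t * (b.1 + b.2 (g t)) (t^-1 w)] *)
Lemma D1_kernel_mul (a b : D1) (S : {fset G}) g w :
  (forall g t, t \notin S -> a.1 t = 0 /\ a.2 g t = 0) ->
  D1_kernel (D1_mul a b) g w =
  \sum_(t <- S) D1_kernel a g t * D1_kernel b (g * t)%g (t^-1 * w)%g.
Proof.
move=> aS; rewrite /D1_kernel /D1_mul /= /kGG_add /kG_add /kG_mul /mul_ab /mul_ba /mul_bb.
rewrite !(fsbigTE S); try by move=> t /(aS g) [a1 a2]; rewrite ?a1 ?a2 mul0r.
by rewrite -!big_split /=; apply: eq_bigr => t _; rewrite mulrDl !mulrDr !addrA.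
Qed.

Lemma mxD1_act_fin (A : mx) (S : {fset G}) (x : cfg) g i :
  (forall i j g t, t \notin S -> D1_kernel (A i j) g t = 0) ->
  mxD1_act A x g 0 i =
  \sum_(j < n) \sum_(t <- S) D1_kernel (A i j) g t * x (g * t)%g 0 j.
Proof.
move=> AS; rewrite mxE; apply: eq_bigr => j _; rewrite (fsbigTE S) //.
by move=> t tS; rewrite AS // mul0r.
Qed.

Lemma D1_kernel_supp (A : mx) (S : {fset G}) :
  (forall i j g t, t \notin S -> (A i j).1 t = 0 /\ (A i j).2 g t = 0) ->
  forall i j g t, t \notin S -> D1_kernel (A i j) g t = 0.
Proof. by move=> AS i j g t /(AS i j g) [a1 a2]; rewrite /D1_kernel a1 a2 addr0. Qed.

Lemma sum_translate (SA SB : {fset G}) (t : G) (F : G -> k) :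
  t \in SA -> (forall u, u \notin SB -> F u = 0) ->
  \sum_(w <- [fset (a * b)%g | a in SA, b in SB]%fset) F (t^-1 * w)%g =
  \sum_(u <- SB) F u.
Proof.
move=> tSA FSB; rewrite -(fsbigTE _ (fun w => F (t^-1 * w)%g)); last first.
  move=> w wW; apply: FSB; apply: contra wW => wSB.
  by apply/imfset2P; exists t => //; exists (t^-1 * w)%g; rewrite ?mulVKg.
rewrite -(fsbigTE SB) // [LHS](reindex_fsbigT (fun u => t * u)%g); last first.
  by exists (fun u => t^-1 * u)%g => u; rewrite ?mulKg ?mulVKg.
by apply: eq_fsbigr => u _ /=; rewrite mulKg.
Qed.

Lemma mxD1_mul_kernel (A B : mx) (SA : {fset G}) :
  (forall i j g t, t \notin SA -> (A i j).1 t = 0 /\ (A i j).2 g t = 0) ->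
  forall i j g w, D1_kernel (mxD1_mul A B i j) g w = \sum_(l < n) \sum_(t <- SA)
    D1_kernel (A i l) g t * D1_kernel (B l j) (g * t)%g (t^-1 * w)%g.
Proof.
move=> ASA i j g w; rewrite /mxD1_mul D1_kernel_sum; apply: eq_bigr => l _.
by apply: D1_kernel_mul => g' t /(ASA i l g').
Qed.

Lemma mxD1_act_mul (A B : mx) : in_mxD1 A -> in_mxD1 B ->
  forall x, mxD1_act (mxD1_mul A B) x = mxD1_act A (mxD1_act B x).
Proof.
move=> inA inB x; have [SA [_ [ASA _]]] := mxD1_fin_supp inA.
have [SB [_ [BSB _]]] := mxD1_fin_supp inB.
have kA := D1_kernel_supp ASA; have kB := D1_kernel_supp BSB.
pose W := [fset (a * b)%g | a in SA, b in SB]%fset.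
have kAB i j g w : w \notin W -> D1_kernel (mxD1_mul A B i j) g w = 0.
  move=> wW; rewrite (mxD1_mul_kernel B ASA) big1 // => l _.
  rewrite big1_seq // => t /andP [_ tSA]; rewrite kB ?mulr0 //.
  apply: contra wW => wSB; apply/imfset2P.
  by exists t => //; exists (t^-1 * w)%g; rewrite ?mulVKg.
apply/funext => g; apply/rowP => i; rewrite (mxD1_act_fin _ _ _ kAB) (mxD1_act_fin _ _ _ kA).
under eq_bigr => j _ do under eq_bigr => w _ do
  rewrite (mxD1_mul_kernel B ASA) mulr_suml.
under eq_bigr => j _ do under eq_bigr => w _ do under eq_bigr => l _ do rewrite mulr_suml.
under eq_bigr => j _ do rewrite exchange_big.
under eq_bigr => j _ do under eq_bigr => l _ do rewrite exchange_big.
rewrite exchange_big; apply: eq_bigr => l _; rewrite exchange_big /=.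
apply: eq_big_seq => t tSA; rewrite (mxD1_act_fin _ _ _ kB) mulr_sumr.
apply: eq_bigr => j _; rewrite mulr_sumr.
rewrite -(@sum_translate SA SB t (fun u => D1_kernel (A i l) g t *
   (D1_kernel (B l j) (g * t)%g u * x (g * t * u)%g 0 j)) tSA); last first.
  by move=> u uSB; rewrite kB ?mul0r ?mulr0.
by apply: eq_bigr => w _ /=; rewrite -mulgA mulVKg mulrA.
Qed.

Lemma mxD1_act1 (x : cfg) : mxD1_act (@mxD1_one G k n) x = x.
Proof.
apply/funext => g; apply/rowP => i; rewrite (mxD1_act_fin (S := [fset 1%g]%fset)); last first.
  move=> i' j g' t; rewrite inE => /negbTE t1.
  by rewrite /D1_kernel /mxD1_one; case: eqP => _ /=; rewrite ?t1 addr0.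
under eq_bigr do rewrite big_seq_fset1 mulg1.
rewrite (bigD1 i) //= big1 ?addr0 => [|j ji].
  rewrite /D1_kernel /mxD1_one /D1_one /= !eqxx /= addr0.
  by case: eqP => [_|//]; rewrite mul1r.
by rewrite /D1_kernel /mxD1_one eq_sym (negbTE ji) /= addr0 mul0r.
Qed.

Definition delta_cfg (h : G) (j : 'I_n) : cfg := fun y => if y == h then delta_mx 0 j else 0.

Lemma mxD1_act_delta (A : mx) h j g i :
  mxD1_act A (delta_cfg h j) g 0 i = D1_kernel (A i j) g (g^-1 * h)%g.
Proof.
have deltaE j' : \sum_(t \in [set: G]) D1_kernel (A i j') g t * delta_cfg h j (g * t)%g 0 j' =
    D1_kernel (A i j') g (g^-1 * h)%g * (j == j')%:R.
  rewrite (fsbigTE [fset (g^-1 * h)%g]%fset) => [|t]; last first.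
    rewrite inE /delta_cfg => th; case: eqP => [ght|_]; last by rewrite mxE mulr0.
    by case/eqP: th; rewrite -ght mulKg.
  by rewrite big_seq_fset1 mulVKg /delta_cfg eqxx mxE eqxx eq_sym.
rewrite mxE (eq_bigr _ (fun j' _ => deltaE j')) (bigD1 j) //= eqxx mulr1.
by rewrite big1 ?addr0 // => j' j'j; rewrite eq_sym (negbTE j'j) mulr0.
Qed.

Definition mxD1_eventually_uniform (A : mx) :=
  exists E : {fset G}, forall i j g, g \notin E -> forall t, (A i j).2 g t = 0.

Lemma mxD1_eventually_uniform1 : mxD1_eventually_uniform (@mxD1_one G k n).
Proof. by exists fset0 => i j g _ t; rewrite /mxD1_one; case: eqP. Qed.

Lemma mxD1_eventually_uniform_mul (A B : mx) :
  in_mxD1 A -> in_mxD1 B -> mxD1_eventually_uniform (mxD1_mul A B).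
Proof.
move=> /mxD1_fin_supp [SA [EA [ASA AEA]]] /mxD1_fin_supp [SB [EB [BSB BEB]]].
exists (EA `|` [fset (e * s^-1)%g | e in EB, s in SA])%fset => i j g gE t.
have gEA : g \notin EA by apply: contra gE; rewrite inE => ->.
rewrite D1_sum_snd big1 // => l _.
rewrite /D1_mul /kGG_add /kG_add /= /mul_ab /mul_ba /mul_bb !fsbig1 ?addr0 //.
- by move=> t' _; rewrite AEA // mul0r.
- by move=> t' _; rewrite AEA // mul0r.
move=> t' _; have [tSA|/(ASA i l g) [-> _]] := boolP (t' \in SA); last by rewrite mul0r.
rewrite BEB ?mulr0 //; apply: contra gE => gtE; rewrite inE; apply/orP; right.
by apply/imfset2P; exists (g * t')%g => //; exists t'; rewrite ?mulgK.
Qed.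

(* delta configurations read off every kernel value; far from the finitely many
   non-uniform points the kernel is [alpha] alone, which then also determines [beta] *)
Lemma mxD1_act_inj (A A' : mx) :
  infinite_set [set: G] -> mxD1_eventually_uniform A -> mxD1_eventually_uniform A' ->
  mxD1_act A =1 mxD1_act A' -> A = A'.
Proof.
move=> infG [E AE] [E' A'E'] AA'.
have kerAA' i j g t : D1_kernel (A i j) g t = D1_kernel (A' i j) g t.
  by rewrite -(mulKg g t) -!mxD1_act_delta AA'.
have [g0 g0E] := exists_notin_fset infG (E `|` E')%fset.
have fstAA' i j t : (A i j).1 t = (A' i j).1 t.
  have := kerAA' i j g0 t; rewrite /D1_kernel AE ?A'E' ?addr0 //;
    by apply: contra g0E; rewrite inE => ->; rewrite ?orbT.
apply/funext => i; apply/funext => j.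
rewrite [A i j]surjective_pairing [A' i j]surjective_pairing; congr pair.
  exact/funext/fstAA'.
apply/funext => g; apply/funext => t.
by have := kerAA' i j g t; rewrite /D1_kernel fstAA' => /addrI.
Qed.

Definition kernel_rule (S : {fset G}) (K : 'I_n -> 'I_n -> G -> k)
    (r : {ffun S -> V k n}) : V k n :=
  \row_i \sum_(j < n) \sum_(t <- S) K i j t * ext r t 0 j.

Lemma kernel_rule_is_linear S K : linear (@kernel_rule S K).
Proof.
move=> a r1 r2; apply/rowP => i; rewrite !mxE mulr_sumr -big_split; apply: eq_bigr => j _.
rewrite mulr_sumr -big_split; apply: eq_bigr => t _.
by rewrite linearP !mxE mulrDr mulrCA.
Qed.
HB.instance Definition _ (S : {fset G}) (K : 'I_n -> 'I_n -> G -> k) :=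
  GRing.isLinear.Build k {ffun S -> V k n} (V k n) *:%R (@kernel_rule S K)
    (@kernel_rule_is_linear S K).

Lemma LNUCA_c_mxD1_act (A : mx) : in_mxD1 A -> LNUCA_c (mxD1_act A).
Proof.
move=> /mxD1_fin_supp [S [E [AS AE]]].
exists S, (fun g => @kernel_rule S (fun i j => D1_kernel (A i j) g)); split.
  exists E, (@kernel_rule S (fun i j t => (A i j).1 t)) => g gE.
  suff -> : (fun i j => D1_kernel (A i j) g) = (fun i j t => (A i j).1 t) by [].
  by apply/funext => i; apply/funext => j; apply/funext => t; rewrite /D1_kernel AE ?addr0.
move=> x; apply/funext => g; apply/rowP => i.
rewrite (mxD1_act_fin _ _ _ (D1_kernel_supp AS)) /sigma mxE.
by apply: eq_bigr => j _; apply: eq_big_seq => t tS; rewrite ext_restr // /shift invgK.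
Qed.

Definition rule_kernel (M : {fset G}) (r : Srule k n M) (i j : 'I_n) (t : G) : k :=
  if insub t is Some m then r [ffun m' => if m' == m then delta_mx 0 j else 0] 0 i else 0.

Lemma rule_kernel_out (M : {fset G}) (r : Srule k n M) i j t :
  t \notin M -> rule_kernel r i j t = 0.
Proof. by move=> tM; rewrite /rule_kernel insubN. Qed.

Lemma rule_kernelE (M : {fset G}) (r : Srule k n M) (u : {ffun M -> V k n}) i :
  r u 0 i = \sum_(j < n) \sum_(t <- M) rule_kernel r i j t * ext u t 0 j.
Proof.
pose del (m : M) j : {ffun M -> V k n} := [ffun m' => if m' == m then delta_mx 0 j else 0].
have ud : u = \sum_(m : M) \sum_(j < n) u m 0 j *: del m j.
  apply/ffunP => m'; rewrite sum_ffunE (bigD1 m') //= [X in _ + X]big1 => [|m mm'].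
    rewrite addr0 sum_ffunE {1}[u m']row_sum_delta; apply: eq_bigr => j _.
    by rewrite !ffunE eqxx.
  by rewrite sum_ffunE big1 // => j _; rewrite !ffunE eq_sym (negbTE mm') scaler0.
rewrite {1}ud !raddf_sum summxE; under eq_bigr do rewrite raddf_sum summxE.
rewrite exchange_big; apply: eq_bigr => j _; rewrite big_seq_fsetE /=.
by apply: eq_bigr => m _; rewrite linearZ mxE /rule_kernel valK ext_val mulrC.
Qed.

Lemma LNUCA_c_is_mxD1_act (tau : cfg -> cfg) : LNUCA_c tau ->
  exists2 A : mx, in_mxD1 A & tau =1 mxD1_act A.
Proof.
move=> [M [s [[E [c sE]] tauE]]].
pose A : mx := fun i j =>
  (rule_kernel c i j, fun g t => rule_kernel (s g) i j t - rule_kernel c i j t).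
exists A.
  move=> i j; split; last split.
  - by apply: (finite_subfset M) => t /=; apply: contraNT => tM; rewrite rule_kernel_out.
  - apply: (finite_subfset E) => g /= nz; apply: contrapT => /negP gE; apply: nz.
    by apply/funext => t; rewrite sE ?subrr.
  - move=> g; apply: (finite_subfset M) => t /=; apply: contraNT => tM.
    by rewrite !rule_kernel_out // subrr.
move=> x; rewrite tauE; apply/funext => g; apply/rowP => i.
rewrite (mxD1_act_fin (S := M)); last first.
  by move=> i' j g' t tM; rewrite /D1_kernel /= !rule_kernel_out // subrr addr0.
rewrite /sigma rule_kernelE; apply: eq_bigr => j _; apply: eq_big_seq => t tM.
by rewrite /D1_kernel /= addrC subrK ext_restr // /shift invgK.
Qed.

Hypothesis infG : infinite_set [set: G].

Lemma LNUCA_c_directly_finite_mxD1 :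
  LNUCA_c_directly_finite G k n -> mxD1_directly_finite G k n.
Proof.
move=> DF A B inA inB AB.
have BA_act : cancel (mxD1_act B) (mxD1_act A).
  by move=> x; rewrite -mxD1_act_mul // AB mxD1_act1.
have AB_act := DF _ _ (LNUCA_c_mxD1_act inA) (LNUCA_c_mxD1_act inB) BA_act.
apply: mxD1_act_inj infG (mxD1_eventually_uniform_mul inB inA) mxD1_eventually_uniform1 _.
by move=> x; rewrite mxD1_act_mul // AB_act mxD1_act1.
Qed.

Lemma mxD1_directly_finite_LNUCA_c :
  mxD1_directly_finite G k n -> LNUCA_c_directly_finite G k n.
Proof.
move=> MDF a b /LNUCA_c_is_mxD1_act [A inA /funext ->].
move=> /LNUCA_c_is_mxD1_act [B inB /funext ->] ab x.
have AB : mxD1_mul A B = @mxD1_one G k n.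
  apply: mxD1_act_inj infG (mxD1_eventually_uniform_mul inA inB) mxD1_eventually_uniform1 _.
  by move=> y; rewrite mxD1_act_mul // mxD1_act1 ab.
by rewrite -mxD1_act_mul // (MDF A B inA inB AB) mxD1_act1.
Qed.

End MatrixAction.

Theorem theorem7p2 (G : groupType) (k : fieldType) (n : nat) :
  infinite_set [set: G] -> (1 <= n)%N ->
  ((forall (M : {fset G}) (s : G -> Srule k n M),
       const_off_finite s -> stably_injective s -> (forall y, exists x, sigma s x = y))
   <-> LNUCA_c_directly_finite G k n)
  /\ (LNUCA_c_directly_finite G k n <-> mxD1_directly_finite G k n).
Proof.
(* the equivalences hold for [n = 0] as well *)
move=> infG _; split; split.
- exact: stably_surjunctive_directly_finite.
- exact: directly_finite_stably_surjunctive.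
- exact: LNUCA_c_directly_finite_mxD1.
- exact: mxD1_directly_finite_LNUCA_c.
Qed.
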